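(* Let $\mathfrak X$ be an axiomatized class of representations in $Rep-K$ such that the layer $\mathfrak X_F$ is also axiomatized. Then $\mathfrak X$ is action-type axiomatized if and only if it is strictly saturated.
   Context: $K$ is a commutative ring with unit. $Rep-K$ is the variety (and category) of two-sorted algebras $(V,G)$, where $V$ is a $K$-module and $G$ a group acting on $V$ by $K$-linear maps, $a\circ g$, with $(a\circ g_1)\circ g_2=a\circ g_1g_2$ and $a\circ 1=a$; morphisms are pairs $(\alpha,\beta)$ of a module homomorphism and a group homomorphism compatible with the action. For countable sets $X,Y$, $F=F(Y)$ is the free group on $Y$ and $W=W(X,Y)=(XKF,F)$ is the free representation, where $XKF$ is the free $KF$-module on $X$ ($KF$ the group algebra). Formulas over $W$ are built from equalities $w\equiv 0$ ($w\in XKF$, action-type equalities) and $f\equiv 1$ ($f\in F$, group equalities) using $\vee,\wedge,\neg,\exists x$ ($x\in X$), $\exists y$ ($y\in Y$); a formula holds in $(V,G)$ if it is satisfied by every homomorphism $W\to (V,G)$. Action-type formulas are those built only from equalities $w\equiv 0$ using $\vee,\wedge,\neg,\exists x$, $x\in X$ (no $\exists y$ and no group equalities). A class $\mathfrak X$ is axiomatized if it is the class of all representations satisfying some set $T$ of such formulas; it is action-type axiomatized if $T$ can be taken to consist of action-type formulas. $\mathfrak X$ is saturated if $(V,G)\in\mathfrak X$ iff the corresponding faithful representation $(V,\overline G)$ (with $\overline G$ the image of $G$ in $Aut V$) is in $\mathfrak X$; right-hereditary if $(V,G)\in\mathfrak X$ implies $(V,H)\in\mathfrak X$ for every subgroup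 $H\subset G$; right-local if $(V,G)\in\mathfrak X$ whenever $(V,H)\in\mathfrak X$ for all finitely generated subgroups $H\subset G$. $\mathfrak X$ is strictly saturated if it is saturated, right-hereditary and right-local. The layer $\mathfrak X_F$ is the class of all representations $(V,F)$ in $\mathfrak X$ whose acting group is the free group $F=F(Y)$ (countable $Y$); it is regarded as a class in $Rep-KF$, the variety of $K$-representations of $F$ viewed as one-sorted algebras (morphisms $(\alpha,1)$ commuting with the $F$-action), whose logic consists of action-type formulas in which the variables from $Y$ are treated as constants. ''The layer $\mathfrak X_F$ is axiomatized'' means it is axiomatized in this logic. *)

From HB Require Import structures.
From Stdlib Require Import ProofIrrelevance FunctionalExtensionality List.
From mathcomp Require Import all_boot all_algebra.
Set Implicit Arguments. Unset Strict Implicit. Unset Printing Implicit Defensive.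
Import GRing.Theory.
Local Open Scope ring_scope.

Record grp := Grp {
  gcar :> Type;
  gmul : gcar -> gcar -> gcar;
  gone : gcar;
  ginv : gcar -> gcar;
  gmulA : forall a b c, gmul a (gmul b c) = gmul (gmul a b) c;
  gmul1g : forall a, gmul gone a = a;
  gmulg1 : forall a, gmul a gone = a;
  gmulVg : forall a, gmul (ginv a) a = gone;
  gmulgV : forall a, gmul a (ginv a) = gone }.


Lemma ginvM (G : grp) (a b : G) : ginv (gmul a b) = gmul (ginv b) (ginv a).
Proof.
have E : gmul (gmul a b) (gmul (ginv b) (ginv a)) = gone G.
  by rewrite gmulA -(gmulA a) gmulgV gmulg1 gmulgV.
by rewrite -[ginv _]gmulg1 -E gmulA gmulVg gmul1g.
Qed.

Definition grp_hom (G H : grp) (phi : G -> H) :=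
  forall a b, phi (gmul a b) = gmul (phi a) (phi b).

(* G is free on the family i : nat -> G (Y = nat, countable) *)
Definition free_on (G : grp) (i : nat -> G) : Prop :=
  forall (H : grp) (j : nat -> H),
    exists! phi : G -> H, grp_hom phi /\ forall y, phi (i y) = j y.

Record rep (K : comPzRingType) := Rep {
  rV : lmodType K;
  rG : grp;
  ract : rV -> rG -> rV;
  ract_lin : forall g (k : K) (a b : rV),
      ract (k *: a + b) g = k *: ract a g + ract b g;
  ract_mul : forall a g1 g2, ract (ract a g1) g2 = ract a (gmul g1 g2);
  ract_one : forall a, ract a (gone rG) = a }.

(* ---------- syntax: elements of F(Y) and of XKF as terms ---------- *)
Inductive gterm := GVar of nat | GOne | GMul of gterm & gterm | GInv of gterm.

Inductive mterm (K : Type) :=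
  MVar of nat | MZero | MAdd of mterm K & mterm K | MOpp of mterm K
| MScale of K & mterm K | MAct of mterm K & gterm.

Inductive formula (K : Type) :=
  FEqM of mterm K            (* w == 0, w in XKF *)
| FEqG of gterm              (* f == 1, f in F *)
| FOr of formula K & formula K
| FAnd of formula K & formula K
| FNot of formula K
| FExX of nat & formula K
| FExY of nat & formula K.

Fixpoint action_type (K : Type) (f : formula K) : Prop :=
  match f with
  | FEqM _ => True
  | FEqG _ => False
  | FOr f1 f2 | FAnd f1 f2 => action_type f1 /\ action_type f2
  | FNot f1 => action_type f1
  | FExX _ f1 => action_type f1
  | FExY _ _ => False
  end.

Definition upd (T : Type) (e : nat -> T) (n : nat) (v : T) : nat -> T :=
  fun m => if m == n then v else e m.

Section Semantics.
Variables (K : comPzRingType) (R : rep K).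

Fixpoint geval (ey : nat -> rG R) (t : gterm) : rG R :=
  match t with
  | GVar y => ey y
  | GOne => gone (rG R)
  | GMul a b => gmul (geval ey a) (geval ey b)
  | GInv a => ginv (geval ey a)
  end.

Fixpoint meval (ex : nat -> rV R) (ey : nat -> rG R) (t : mterm K) : rV R :=
  match t with
  | MVar x => ex x
  | MZero => 0
  | MAdd a b => meval ex ey a + meval ex ey b
  | MOpp a => - meval ex ey a
  | MScale k a => k *: meval ex ey a
  | MAct a g => ract (meval ex ey a) (geval ey g)
  end.

(* satisfaction by the homomorphism W -> (V,G) determined by (ex, ey) *)
Fixpoint sat (ex : nat -> rV R) (ey : nat -> rG R) (f : formula K) : Prop :=
  match f with
  | FEqM w => meval ex ey w = 0
  | FEqG g => geval ey g = gone (rG R)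
  | FOr f1 f2 => sat ex ey f1 \/ sat ex ey f2
  | FAnd f1 f2 => sat ex ey f1 /\ sat ex ey f2
  | FNot f1 => ~ sat ex ey f1
  | FExX x f1 => exists v, sat (upd ex x v) ey f1
  | FExY y f1 => exists g, sat ex (upd ey y g) f1
  end.

Definition holds (f : formula K) : Prop := forall ex ey, sat ex ey f.

End Semantics.

Definition rclass (K : comPzRingType) := rep K -> Prop.

Definition axiomatized (K : comPzRingType) (X : rclass K) : Prop :=
  exists T : formula K -> Prop, forall R, X R <-> (forall f, T f -> holds R f).

Definition action_axiomatized (K : comPzRingType) (X : rclass K) : Prop :=
  exists T : formula K -> Prop, (forall f, T f -> action_type f) /\
    forall R, X R <-> (forall f, T f -> holds R f).

(* The layer X_F is axiomatized in Rep-KF: a set T of action-type formulas,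
   with the variables of Y interpreted as the free generators of F, defines
   the members (V,F) of X with free acting group F = F(Y). *)
Definition layer_axiomatized (K : comPzRingType) (X : rclass K) : Prop :=
  exists T : formula K -> Prop, (forall f, T f -> action_type f) /\
    forall (R : rep K) (i : nat -> rG R), free_on i ->
      (X R <-> (forall f, T f -> forall ex, sat ex i f)).

Section Faithful.
Variables (K : comPzRingType) (R : rep K).
Let V := rV R.
Let G := rG R.

Definition fcar :=
  {p : (V -> V) * (V -> V) |
     exists g : G, p.1 = (fun a => ract a g) /\ p.2 = (fun a => ract a (ginv g))}.

Lemma fmul_proof (p q : fcar) :
  exists g : G, (fun a => (sval q).1 ((sval p).1 a),
                 fun a => (sval p).2 ((sval q).2 a)).1 = (fun a => ract a g) /\
                (fun a => (sval q).1 ((sval p).1 a),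
                 fun a => (sval p).2 ((sval q).2 a)).2 = (fun a => ract a (ginv g)).
Proof.
case: p q => [[f1 h1] [g1 [/= -> ->]]] [[f2 h2] [g2 [/= -> ->]]] /=.
exists (gmul g1 g2); split; apply: functional_extensionality => a;
  rewrite ract_mul //.
by rewrite ginvM.
Qed.

Definition fmul (p q : fcar) : fcar := exist _ (fun a => (sval q).1 ((sval p).1 a),
                 fun a => (sval p).2 ((sval q).2 a)) (fmul_proof p q).

Lemma fone_proof : exists g : G, (@id V, @id V).1 = (fun a => ract a g) /\
                                 (@id V, @id V).2 = (fun a => ract a (ginv g)).
Proof.
exists (gone G); split; apply: functional_extensionality => a /=;
  first by rewrite ract_one.
by rewrite -[ginv _]gmulg1 gmulVg ract_one.
Qed.

Definition fone : fcar := exist _ (@id V, @id V) fone_proof.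

Lemma finv_proof (p : fcar) :
  exists g : G, ((sval p).2, (sval p).1).1 = (fun a => ract a g) /\
                ((sval p).2, (sval p).1).2 = (fun a => ract a (ginv g)).
Proof.
case: p => [[f h] [g [/= -> ->]]] /=; exists (ginv g); split => //.
apply: functional_extensionality => a; congr (ract a _).
by rewrite -[ginv (ginv g)]gmul1g -(gmulgV g) -gmulA gmulgV gmulg1.
Qed.

Definition finv (p : fcar) : fcar := exist _ ((sval p).2, (sval p).1) (finv_proof p).

Lemma fcar_eq (p q : fcar) : sval p = sval q -> p = q.
Proof.
case: p q => [p Hp] [q Hq] /= E; subst q; f_equal; apply: proof_irrelevance.
Qed.

Lemma fmulA (a b c : fcar) : fmul a (fmul b c) = fmul (fmul a b) c.
Proof. by apply: fcar_eq. Qed.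
Lemma fmul1g (a : fcar) : fmul fone a = a.
Proof. by apply: fcar_eq; case: a => [[f h] ?]. Qed.
Lemma fmulg1 (a : fcar) : fmul a fone = a.
Proof. by apply: fcar_eq; case: a => [[f h] ?]. Qed.
Lemma fmulVg (a : fcar) : fmul (finv a) a = fone.
Proof.
apply: fcar_eq; case: a => [[f h] [g [/= -> ->]]] /=.
by congr pair; apply: functional_extensionality => a;
  rewrite ract_mul ?gmulgV ?gmulVg ract_one.
Qed.
Lemma fmulgV (a : fcar) : fmul a (finv a) = fone.
Proof.
apply: fcar_eq; case: a => [[f h] [g [/= -> ->]]] /=.
by congr pair; apply: functional_extensionality => a;
  rewrite ract_mul ?gmulgV ?gmulVg ract_one.
Qed.

(* G-bar: the image of G in Aut V *)
Definition Gbar : grp := Grp fmulA fmul1g fmulg1 fmulVg fmulgV.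

Definition fact (a : V) (p : Gbar) : V := (sval p).1 a.

Lemma fact_lin (p : Gbar) (k : K) (a b : V) :
  fact (k *: a + b) p = k *: fact a p + fact b p.
Proof.
case: p => [[f h] Hp]; rewrite /fact /=; case: Hp => g [/= -> _].
exact: ract_lin.
Qed.
Lemma fact_mul a (p q : Gbar) : fact (fact a p) q = fact a (gmul p q).
Proof. by []. Qed.
Lemma fact_one a : fact a (gone Gbar) = a.
Proof. by []. Qed.

Definition faithful_rep : rep K := Rep fact_lin fact_mul fact_one.
End Faithful.

Record subgroup (G : grp) := Subgroup {
  sg_mem :> G -> Prop;
  sg_one : sg_mem (gone G);
  sg_mul : forall a b, sg_mem a -> sg_mem b -> sg_mem (gmul a b);
  sg_inv : forall a, sg_mem a -> sg_mem (ginv a) }.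

Section Sub.
Variables (G : grp) (H : subgroup G).
Definition scar := {g : G | H g}.
Lemma scar_eq (a b : scar) : sval a = sval b -> a = b.
Proof. case: a b => [a Ha] [b Hb] /= E; subst b; f_equal; apply: proof_irrelevance. Qed.
Definition smul (a b : scar) : scar := exist _ _ (sg_mul (svalP a) (svalP b)).
Definition sone : scar := exist _ _ (sg_one H).
Definition sinv (a : scar) : scar := exist _ _ (sg_inv (svalP a)).
Lemma smulA a b c : smul a (smul b c) = smul (smul a b) c.
Proof. by apply: scar_eq; rewrite /= gmulA. Qed.
Lemma smul1g a : smul sone a = a. Proof. by apply: scar_eq; rewrite /= gmul1g. Qed.
Lemma smulg1 a : smul a sone = a. Proof. by apply: scar_eq; rewrite /= gmulg1. Qed.
Lemma smulVg a : smul (sinv a) a = sone. Proof. by apply: scar_eq; rewrite /= gmulVg. Qed.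
Lemma smulgV a : smul a (sinv a) = sone. Proof. by apply: scar_eq; rewrite /= gmulgV. Qed.
Definition subgrp : grp := Grp smulA smul1g smulg1 smulVg smulgV.
End Sub.

Inductive gen_by (G : grp) (l : seq G) : G -> Prop :=
| gen_in g : Stdlib.Lists.List.In g l -> gen_by l g
| gen_one : gen_by l (gone G)
| gen_mul a b : gen_by l a -> gen_by l b -> gen_by l (gmul a b)
| gen_inv a : gen_by l a -> gen_by l (ginv a).

Definition fin_gen (G : grp) (H : subgroup G) : Prop :=
  exists l : seq G, forall g, H g <-> gen_by l g.

Section SubRep.
Variables (K : comPzRingType) (R : rep K) (H : subgroup (rG R)).
Definition sact (a : rV R) (h : subgrp H) : rV R := ract a (sval h).
Lemma sact_lin (h : subgrp H) (k : K) a b :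
  sact (k *: a + b) h = k *: sact a h + sact b h.
Proof. exact: ract_lin. Qed.
Lemma sact_mul a (h1 h2 : subgrp H) : sact (sact a h1) h2 = sact a (gmul h1 h2).
Proof. exact: ract_mul. Qed.
Lemma sact_one a : sact a (gone (subgrp H)) = a.
Proof. exact: ract_one. Qed.
Definition sub_rep : rep K := Rep sact_lin sact_mul sact_one.
End SubRep.

Definition saturated (K : comPzRingType) (X : rclass K) : Prop :=
  forall R : rep K, X R <-> X (faithful_rep R).

Definition right_hereditary (K : comPzRingType) (X : rclass K) : Prop :=
  forall (R : rep K) (H : subgroup (rG R)), X R -> X (sub_rep H).

Definition right_local (K : comPzRingType) (X : rclass K) : Prop :=
  forall R : rep K,
    (forall H : subgroup (rG R), fin_gen H -> X (sub_rep H)) -> X R.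

Definition strictly_saturated (K : comPzRingType) (X : rclass K) : Prop :=
  saturated X /\ right_hereditary X /\ right_local X.

From mathcomp Require Import all_boot all_algebra.
From Stdlib Require Import FunctionalExtensionality IndefiniteDescription.
From Stdlib Require List.
Set Implicit Arguments. Unset Strict Implicit. Unset Printing Implicit Defensive.
Import GRing.Theory.
Local Open Scope ring_scope.

(* An action-type formula only uses the group through the action of the values
   of its variables, so its satisfaction is unchanged along morphisms (a, b) of
   representations with a bijective; applied to G -> Gbar, to H -> G and to the
   subgroup generated by the finitely many variables of a formula, this gives
   saturation, right heredity and right locality.
   Conversely, let T axiomatize the layer X_F. If j : Y -> G generates G, then
   (V, F) acting through the induced epimorphism F -> G has the same faithful
   representation as (V, G), so by saturation (V, G) lies in X iff T holds in
   (V, F) at the free generators, i.e. iff T holds in (V, G) under j. Right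
   heredity, applied to the subgroup generated by an arbitrary assignment, and
   right locality, applied to finitely generated subgroups, then show that T
   axiomatizes X. *)

Lemma grp_hom_one (G H : grp) (phi : G -> H) : grp_hom phi -> phi (gone G) = gone H.
Proof.
move=> phi_hom; have idem : gmul (phi (gone G)) (phi (gone G)) = phi (gone G).
  by rewrite -phi_hom gmul1g.
by rewrite -[LHS]gmul1g -(gmulVg (phi (gone G))) -gmulA idem.
Qed.

Lemma grp_hom_inv (G H : grp) (phi : G -> H) a :
  grp_hom phi -> phi (ginv a) = ginv (phi a).
Proof.
move=> phi_hom; have inv : gmul (phi (ginv a)) (phi a) = gone H.
  by rewrite -phi_hom gmulVg grp_hom_one.
by rewrite -[LHS]gmulg1 -(gmulgV (phi a)) gmulA inv gmul1g.
Qed.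

Lemma sval_hom (G : grp) (H : subgroup G) : grp_hom (sval : subgrp H -> G).
Proof. by []. Qed.

Definition letter := (nat * bool)%type.
Definition letter_inv (l : letter) : letter := (l.1, ~~ l.2).

Lemma letter_invK : involutive letter_inv.
Proof. by case=> n []. Qed.

(* Words are stored last letter first: [push s l] is the reduction of the word
   [s] followed by the letter [l]. *)
Definition push (s : seq letter) (l : letter) : seq letter :=
  if s is a :: s' then (if a == letter_inv l then s' else l :: s) else [:: l].

Definition reduced : pred (seq letter) := sorted (fun a b => b != letter_inv a).

Lemma reduced_behead a s : reduced (a :: s) -> reduced s.
Proof. exact: path_sorted. Qed.

Lemma push_reduced s l : reduced (l :: s) -> push s l = l :: s.
Proof. by case: s => // a s /andP[/negbTE a_l _]; rewrite /push a_l. Qed.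

Lemma reduced_push s l : reduced s -> reduced (push s l).
Proof.
case: s => [|a s] // s_red; rewrite /push; case: eqP => [_|a_l].
  exact: reduced_behead s_red.
by apply/andP; split; [apply/eqP | exact: s_red].
Qed.

Lemma reduced_foldl s w : reduced s -> reduced (foldl push s w).
Proof. by elim: w s => [|a w IHw] s s_red //=; apply/IHw/reduced_push. Qed.

Lemma push_pushV s l : reduced s -> push (push s l) (letter_inv l) = s.
Proof.
case: s => [|a s] s_red; first by rewrite /push letter_invK eqxx.
have [a_l|a_l] := eqVneq a (letter_inv l); last first.
  by rewrite /push (negbTE a_l) letter_invK eqxx.
move: s_red; rewrite a_l /push eqxx; case: s => [|b s] //= /andP[b_l _].
by rewrite (negbTE b_l).
Qed.

Lemma foldl_push_rev_push s t l : reduced s ->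
  foldl push s (rev (push t l)) = push (foldl push s (rev t)) l.
Proof.
case: t => [|a t] s_red //; rewrite [push (a :: t) l]/push.
case: eqP => [->|_]; last by rewrite rev_cons foldl_rcons.
rewrite rev_cons foldl_rcons.
by rewrite -{2}[l]letter_invK push_pushV // reduced_foldl.
Qed.

Lemma foldl_push_assoc s t w : reduced s ->
  foldl push s (rev (foldl push t w)) = foldl push (foldl push s (rev t)) w.
Proof.
by elim: w t => [|a w IHw] t s_red //=; rewrite IHw // foldl_push_rev_push.
Qed.

Lemma foldl_push_inv s : reduced s -> foldl push s (map letter_inv s) = [::].
Proof.
elim: s => [|a s IHs] s_red //=.
by rewrite letter_invK eqxx IHs // (reduced_behead s_red).
Qed.

Lemma foldl_push_invK s t : reduced s -> foldl push s (map letter_inv t ++ rev t) = s.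
Proof.
elim: t s => [|a t IHt] s s_red //=.
rewrite rev_cons -cats1 catA foldl_cat IHt ?reduced_push //=.
by rewrite -{2}[a]letter_invK push_pushV.
Qed.

Lemma foldl_push_nil s : reduced s -> foldl push [::] (rev s) = s.
Proof.
elim: s => [|a s IHs] s_red //.
by rewrite rev_cons foldl_rcons IHs ?(reduced_behead s_red) // push_reduced.
Qed.

Definition free_car := {s : seq letter | reduced s}.

Definition free_mul (u v : free_car) : free_car :=
  exist _ (foldl push (sval u) (rev (sval v))) (@reduced_foldl _ _ (svalP u)).
Definition free_one : free_car := exist _ [::] isT.
Definition free_inv (u : free_car) : free_car :=
  exist _ (foldl push [::] (map letter_inv (sval u))) (@reduced_foldl [::] _ isT).

Lemma free_mulA u v w : free_mul u (free_mul v w) = free_mul (free_mul u v) w.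
Proof. by apply: val_inj; apply: foldl_push_assoc (svalP u). Qed.
Lemma free_mul1g u : free_mul free_one u = u.
Proof. by apply: val_inj; apply: foldl_push_nil (svalP u). Qed.
Lemma free_mulg1 u : free_mul u free_one = u.
Proof. exact: val_inj. Qed.
Lemma free_mulVg u : free_mul (free_inv u) u = free_one.
Proof. by apply: val_inj; rewrite /= -foldl_cat foldl_push_invK. Qed.
Lemma free_mulgV u : free_mul u (free_inv u) = free_one.
Proof.
by apply: val_inj; rewrite /= foldl_push_assoc ?(svalP u) //= foldl_push_inv ?(svalP u).
Qed.

Definition free_grp : grp := Grp free_mulA free_mul1g free_mulg1 free_mulVg free_mulgV.
Definition free_gen (y : nat) : free_grp := exist _ [:: (y, true)] isT.

Section FreeEval.
Variables (H : grp) (j : nat -> H).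

Definition letter_eval (l : letter) : H := if l.2 then j l.1 else ginv (j l.1).

Fixpoint word_eval (s : seq letter) : H :=
  if s is a :: s' then gmul (word_eval s') (letter_eval a) else gone H.

Lemma letter_evalV l : gmul (letter_eval (letter_inv l)) (letter_eval l) = gone H.
Proof. by case: l => n []; rewrite /letter_eval /= ?gmulVg ?gmulgV. Qed.

Lemma word_eval_push s l : word_eval (push s l) = gmul (word_eval s) (letter_eval l).
Proof.
case: s => [|a s] /=; first by rewrite gmul1g.
by case: eqP => [->|_] //=; rewrite -gmulA letter_evalV gmulg1.
Qed.

Lemma word_eval_foldl s t :
  word_eval (foldl push s (rev t)) = gmul (word_eval s) (word_eval t).
Proof.
elim: t s => [|a t IHt] s /=; first by rewrite gmulg1.
by rewrite rev_cons foldl_rcons word_eval_push IHt gmulA.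
Qed.

Definition free_eval (w : free_grp) : H := word_eval (sval w).

Lemma free_eval_hom : grp_hom free_eval.
Proof. by move=> u v; apply: word_eval_foldl. Qed.

Lemma free_eval_gen y : free_eval (free_gen y) = j y.
Proof. by rewrite /free_eval /= gmul1g. Qed.

End FreeEval.

Lemma free_eval_comp (G H : grp) (psi : G -> H) (j : nat -> G) w :
  grp_hom psi -> free_eval (psi \o j) w = psi (free_eval j w).
Proof.
move=> psi_hom; rewrite /free_eval; case: w => s _ /=.
elim: s => [|[n []] s IHs] /=; first by rewrite grp_hom_one.
  by rewrite psi_hom IHs.
by rewrite psi_hom IHs (grp_hom_inv _ psi_hom).
Qed.

Lemma free_grp_free_on : free_on free_gen.
Proof.
move=> H j; exists (free_eval j); split.
  by split; [apply: free_eval_hom | apply: free_eval_gen].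
move=> psi [psi_hom psi_gen]; apply: functional_extensionality => -[s s_red].
elim: s s_red => [|a s IHs] s_red.
  by rewrite /free_eval /= -(grp_hom_one psi_hom); congr psi; apply: val_inj.
have -> : exist _ (a :: s) s_red =
    gmul (exist _ s (reduced_behead s_red) : free_grp) (exist _ [:: a] isT : free_grp).
  by apply: val_inj; rewrite /= push_reduced.
rewrite psi_hom -IHs /free_eval /= push_reduced //=; congr gmul.
case: a s_red => n [] _; rewrite /letter_eval /= -psi_gen //.
rewrite -(grp_hom_inv _ psi_hom); congr psi; exact: val_inj.
Qed.

Lemma upd_comp (A B : Type) (h : A -> B) (e : nat -> A) x v :
  upd (h \o e) x (h v) = h \o upd e x v.
Proof. by apply: functional_extensionality => n; rewrite /upd /=; case: eqP. Qed.

Lemma exists_upd_bij (A B : Type) (h : A -> B)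
    (P : (nat -> A) -> Prop) (Q : (nat -> B) -> Prop) {e : nat -> A} {x : nat} :
  bijective h -> (forall e, Q (h \o e) <-> P e) ->
  (exists v, Q (upd (h \o e) x v)) <-> (exists u, P (upd e x u)).
Proof.
case=> h' _ h'K QP; split=> -[v Hv].
  by exists (h' v); rewrite -QP -upd_comp h'K.
by exists (h v); rewrite upd_comp QP.
Qed.

Lemma bijective_idfun (T : Type) : bijective (@idfun T).
Proof. by exists idfun. Qed.

Section RepMorphism.
Variables (K : comPzRingType) (R1 R2 : rep K).
Variables (a : {linear rV R1 -> rV R2}) (b : rG R1 -> rG R2).
Hypotheses (b_hom : grp_hom b) (a_act : forall v g, a (ract v g) = ract (a v) (b g)).

Lemma geval_morph ey t : geval (b \o ey) t = b (geval ey t).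
Proof.
elim: t => [y||t1 IH1 t2 IH2|t IHt] /=.
- by [].
- by rewrite grp_hom_one.
- by rewrite IH1 IH2 b_hom.
- by rewrite IHt grp_hom_inv.
Qed.

Lemma meval_morph ex ey t : meval (a \o ex) (b \o ey) t = a (meval ex ey t).
Proof.
elim: t => [x||t1 IH1 t2 IH2|t IHt|k t IHt|t IHt g] /=.
- by [].
- by rewrite raddf0.
- by rewrite IH1 IH2 raddfD.
- by rewrite IHt raddfN.
- by rewrite IHt linearZ.
- by rewrite IHt geval_morph a_act.
Qed.

Hypothesis a_bij : bijective a.

Lemma meval_morph_eq0 ex ey t :
  meval (a \o ex) (b \o ey) t = 0 <-> meval ex ey t = 0.
Proof.
rewrite meval_morph; split=> [|->]; last exact: raddf0.
by rewrite -(raddf0 a); apply: bij_inj.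
Qed.

Lemma sat_morph f ex ey :
  action_type f -> sat (a \o ex) (b \o ey) f <-> sat ex ey f.
Proof.
elim: f ex => [t|t|f1 IH1 f2 IH2|f1 IH1 f2 IH2|f1 IH1|x f1 IH1|y f1 IH1] ex //= f_act.
- exact: meval_morph_eq0.
- by case: f_act => /IH1 -> /IH2 ->.
- by case: f_act => /IH1 -> /IH2 ->.
- by rewrite IH1.
- apply: (exists_upd_bij (P := fun e => sat e ey f1) (Q := fun e => sat e (b \o ey) f1) a_bij).
  by move=> e; apply: IH1.
Qed.

Lemma holds_morph f : action_type f -> holds R2 f -> holds R1 f.
Proof. by move=> f_act R2f ex ey; apply/sat_morph. Qed.

Lemma holds_morph_surj f : action_type f -> (forall h, exists g, b g = h) ->
  holds R1 f <-> holds R2 f.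
Proof.
move=> f_act b_onto; split; last exact: holds_morph.
move=> R1f ex ey; have [ey1 ey1K] := functional_choice _ (fun n => b_onto (ey n)).
have [a' _ a'K] := a_bij.
have -> : ex = a \o (a' \o ex) by apply: functional_extensionality => n; rewrite /= a'K.
have -> : ey = b \o ey1 by apply: functional_extensionality => n; rewrite /= ey1K.
exact/sat_morph.
Qed.

Hypothesis b_bij : bijective b.

Lemma sat_iso f ex ey : sat (a \o ex) (b \o ey) f <-> sat ex ey f.
Proof.
elim: f ex ey => [t|t|f1 IH1 f2 IH2|f1 IH1 f2 IH2|f1 IH1|x f1 IH1|y f1 IH1] ex ey /=.
- exact: meval_morph_eq0.
- rewrite geval_morph -(grp_hom_one b_hom).
  by split=> [/(bij_inj b_bij)|->].
- by rewrite IH1 IH2.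
- by rewrite IH1 IH2.
- by rewrite IH1.
- apply: (exists_upd_bij (P := fun e => sat e ey f1) (Q := fun e => sat e (b \o ey) f1) a_bij).
  by move=> e; apply: IH1.
- apply: (exists_upd_bij (P := fun e => sat ex e f1) (Q := fun e => sat (a \o ex) e f1) b_bij).
  by move=> e; apply: IH1.
Qed.

Lemma holds_iso f : holds R1 f <-> holds R2 f.
Proof.
have [a' _ a'K] := a_bij; have [b' _ b'K] := b_bij.
split=> Rf ex ey; last exact/sat_iso.
have -> : ex = a \o (a' \o ex) by apply: functional_extensionality => n; rewrite /= a'K.
have -> : ey = b \o (b' \o ey) by apply: functional_extensionality => n; rewrite /= b'K.
exact/sat_iso.
Qed.

End RepMorphism.

Fixpoint gbound (t : gterm) : nat :=
  match t with
  | GVar y => y.+1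
  | GOne => 0
  | GMul t1 t2 => maxn (gbound t1) (gbound t2)
  | GInv t1 => gbound t1
  end.

Fixpoint mbound (K : Type) (t : mterm K) : nat :=
  match t with
  | MVar _ | MZero => 0
  | MAdd t1 t2 => maxn (mbound t1) (mbound t2)
  | MOpp t1 | MScale _ t1 => mbound t1
  | MAct t1 g => maxn (mbound t1) (gbound g)
  end.

Fixpoint fbound (K : Type) (f : formula K) : nat :=
  match f with
  | FEqM t => mbound t
  | FEqG t => gbound t
  | FOr f1 f2 | FAnd f1 f2 => maxn (fbound f1) (fbound f2)
  | FNot f1 | FExX _ f1 | FExY _ f1 => fbound f1
  end.

Section Bound.
Variables (K : comPzRingType) (R : rep K) (n : nat).

Definition agree_below (e1 e2 : nat -> rG R) := forall y, (y < n)%N -> e1 y = e2 y.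

Lemma geval_eq_below e1 e2 t :
  agree_below e1 e2 -> (gbound t <= n)%N -> geval e1 t = geval e2 t.
Proof.
move=> e12; elim: t => [y||t1 IH1 t2 IH2|t IHt] //=.
- exact: e12.
- by rewrite geq_max => /andP[/IH1 -> /IH2 ->].
- by move=> /IHt ->.
Qed.

Lemma meval_eq_below ex e1 e2 t :
  agree_below e1 e2 -> (mbound t <= n)%N -> meval ex e1 t = meval ex e2 t.
Proof.
move=> e12; elim: t => [x||t1 IH1 t2 IH2|t IHt|k t IHt|t IHt g] //=.
- by rewrite geq_max => /andP[/IH1 -> /IH2 ->].
- by move=> /IHt ->.
- by move=> /IHt ->.
- by rewrite geq_max => /andP[/IHt -> /(geval_eq_below e12) ->].
Qed.

Lemma sat_eq_below f ex e1 e2 :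
  agree_below e1 e2 -> (fbound f <= n)%N -> sat ex e1 f <-> sat ex e2 f.
Proof.
elim: f ex e1 e2 => [t|t|f1 IH1 f2 IH2|f1 IH1 f2 IH2|f1 IH1|x f1 IH1|y f1 IH1]
  ex e1 e2 e12 /=.
- by move=> /(meval_eq_below ex e12) ->.
- by move=> /(geval_eq_below e12) ->.
- by rewrite geq_max => /andP[/(IH1 ex _ _ e12) -> /(IH2 ex _ _ e12) ->].
- by rewrite geq_max => /andP[/(IH1 ex _ _ e12) -> /(IH2 ex _ _ e12) ->].
- by move=> /(IH1 ex _ _ e12) ->.
- by move=> bnd; split=> -[v Hv]; exists v; apply/(IH1 _ _ _ e12 bnd).
- move=> bnd; have e12' g : agree_below (upd e1 y g) (upd e2 y g).
    by move=> z z_n; rewrite /upd; case: eqP => // _; apply: e12.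
  by split=> -[g Hg]; exists g; apply/(IH1 _ _ _ (e12' g) bnd).
Qed.

End Bound.

Section Subgroups.
Variable G : grp.

(* [List.nth] defaults to the identity, which lies in every generated subgroup. *)
Lemma gen_by_nth (l : seq G) n : gen_by l (List.nth n l (gone G)).
Proof.
have [n_l|l_n] := PeanoNat.Nat.lt_ge_cases n (length l).
  exact/gen_in/List.nth_In.
rewrite List.nth_overflow //; exact: gen_one.
Qed.

Lemma gen_by_free_eval (l : seq G) g :
  gen_by l g -> exists w, free_eval (fun n => List.nth n l (gone G)) w = g.
Proof.
elim=> {g} [g /(List.In_nth _ _ (gone G)) [n [_ <-]]| | a b _ [u <-] _ [v <-] | a _ [u <-]].
- by exists (free_gen n); rewrite free_eval_gen.
- by exists (gone free_grp).
- by exists (gmul u v); rewrite free_eval_hom.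
- by exists (ginv u); rewrite (grp_hom_inv _ (free_eval_hom _)).
Qed.

Section Image.
Variables (G0 : grp) (phi : G0 -> G).
Hypothesis phi_hom : grp_hom phi.

Lemma image_one : exists w, phi w = gone G.
Proof. by exists (gone G0); rewrite grp_hom_one. Qed.

Lemma image_mul g h : (exists w, phi w = g) -> (exists w, phi w = h) ->
  exists w, phi w = gmul g h.
Proof. by move=> [u <-] [v <-]; exists (gmul u v); rewrite phi_hom. Qed.

Lemma image_inv g : (exists w, phi w = g) -> exists w, phi w = ginv g.
Proof. by move=> [u <-]; exists (ginv u); rewrite (grp_hom_inv _ phi_hom). Qed.

Definition image_subgroup : subgroup G := Subgroup image_one image_mul image_inv.
End Image.

Lemma free_eval_subgrp_onto (H : subgroup G) (j : nat -> subgrp H) :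
  (forall g, H g -> exists w, free_eval (sval \o j) w = g) ->
  forall h, exists w, free_eval j w = h.
Proof.
move=> onto [g Hg]; have [w Hw] := onto g Hg; exists w.
by apply: scar_eq; rewrite /= -Hw free_eval_comp.
Qed.

End Subgroups.

Section Faithful.
Variables (K : comPzRingType) (R : rep K).

Definition to_Gbar (g : rG R) : Gbar R :=
  exist _ (fun v => ract v g, fun v => ract v (ginv g)) (ex_intro _ g (conj erefl erefl)).

Lemma to_Gbar_hom : grp_hom to_Gbar.
Proof.
move=> g h; apply: fcar_eq; congr pair; apply: functional_extensionality => v /=.
  by rewrite ract_mul.
by rewrite ract_mul ginvM.
Qed.

Lemma to_Gbar_onto (p : Gbar R) : exists g, to_Gbar g = p.
Proof.
case: p => [[f h] p_g]; have [g [/= f_g h_g]] := p_g.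
by exists g; apply: fcar_eq; rewrite /= f_g h_g.
Qed.

Lemma holds_faithful f : action_type f -> holds (faithful_rep R) f <-> holds R f.
Proof.
move=> f_act; symmetry.
exact: (holds_morph_surj (R1 := R) (R2 := faithful_rep R) (a := idfun) to_Gbar_hom
  (fun _ _ => erefl) (bijective_idfun _) f_act to_Gbar_onto).
Qed.

End Faithful.

Section SubRep.
Variables (K : comPzRingType) (R : rep K) (H : subgroup (rG R)).

Lemma sat_sub_rep f ex ey :
  action_type f -> sat (R := sub_rep H) ex ey f <-> sat (R := R) ex (sval \o ey) f.
Proof.
move=> f_act; symmetry.
exact: (sat_morph (R1 := sub_rep H) (R2 := R) (a := idfun) (@sval_hom _ H)
  (fun _ _ => erefl) (bijective_idfun _) ex ey f_act).
Qed.

Lemma holds_sub_rep f : action_type f -> holds R f -> holds (sub_rep H) f.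
Proof.
exact: (holds_morph (R1 := sub_rep H) (R2 := R) (a := idfun) (@sval_hom _ H)
  (fun _ _ => erefl) (bijective_idfun _)).
Qed.

End SubRep.

Section Pullback.
Variables (K : comPzRingType) (R : rep K) (G0 : grp) (phi : G0 -> rG R).
Hypothesis phi_hom : grp_hom phi.

Definition pullback_act (v : rV R) (g : G0) : rV R := ract v (phi g).

Lemma pullback_act_lin g (k : K) (u v : rV R) :
  pullback_act (k *: u + v) g = k *: pullback_act u g + pullback_act v g.
Proof. exact: ract_lin. Qed.

Lemma pullback_act_mul v g1 g2 :
  pullback_act (pullback_act v g1) g2 = pullback_act v (gmul g1 g2).
Proof. by rewrite /pullback_act ract_mul phi_hom. Qed.

Lemma pullback_act_one v : pullback_act v (gone G0) = v.
Proof. by rewrite /pullback_act grp_hom_one // ract_one. Qed.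

Definition pullback : rep K := Rep pullback_act_lin pullback_act_mul pullback_act_one.

Lemma sat_pullback f ex ey :
  action_type f -> sat (R := pullback) ex ey f <-> sat (R := R) ex (phi \o ey) f.
Proof.
move=> f_act; symmetry.
exact: (sat_morph (R1 := pullback) (R2 := R) (a := idfun) phi_hom (fun _ _ => erefl)
  (bijective_idfun _) ex ey f_act).
Qed.

Hypothesis phi_onto : forall g, exists w, phi w = g.

Lemma Gbar_pullback_proof (p : Gbar pullback) : exists g : rG R,
  (sval p).1 = (fun v : rV R => ract v g) /\ (sval p).2 = (fun v : rV R => ract v (ginv g)).
Proof.
case: p => [[f h] [w [/= -> ->]]]; exists (phi w).
by rewrite /pullback_act (grp_hom_inv _ phi_hom).
Qed.

Lemma Gbar_pullback_inv_proof (q : Gbar R) : exists w : G0,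
  (sval q).1 = (fun v => pullback_act v w) /\ (sval q).2 = (fun v => pullback_act v (ginv w)).
Proof.
case: q => [[f h] [g [/= -> ->]]]; have [w <-] := phi_onto g; exists w.
by rewrite /pullback_act (grp_hom_inv _ phi_hom).
Qed.

Definition Gbar_pullback (p : Gbar pullback) : Gbar R :=
  exist _ (sval p) (Gbar_pullback_proof p).

Lemma Gbar_pullback_hom : grp_hom Gbar_pullback.
Proof. by move=> p q; apply: fcar_eq. Qed.

Lemma Gbar_pullback_bij : bijective Gbar_pullback.
Proof.
exists (fun q => exist _ (sval q) (Gbar_pullback_inv_proof q) : Gbar pullback).
  by move=> p; apply: fcar_eq.
by move=> q; apply: fcar_eq.
Qed.

Lemma holds_faithful_pullback f :
  holds (faithful_rep pullback) f <-> holds (faithful_rep R) f.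
Proof.
exact: (holds_iso (R1 := faithful_rep pullback) (R2 := faithful_rep R) (a := idfun)
  Gbar_pullback_hom (fun _ _ => erefl) (bijective_idfun _) Gbar_pullback_bij).
Qed.

Lemma mem_pullback (X : rclass K) : axiomatized X -> saturated X -> X pullback <-> X R.
Proof.
move=> [T X_T] X_sat; rewrite X_sat (X_sat R) !X_T.
by split=> Xf f Tf; [rewrite -holds_faithful_pullback | rewrite holds_faithful_pullback];
  apply: Xf.
Qed.

End Pullback.

Section ActionTypeAxioms.
Variables (K : comPzRingType) (X : rclass K) (T : formula K -> Prop).
Hypotheses (T_action : forall f, T f -> action_type f)
  (X_T : forall R, X R <-> (forall f, T f -> holds R f)).

Lemma action_axioms_saturated : saturated X.
Proof.
move=> R; rewrite !X_T.
by split=> Rf f Tf; apply/(holds_faithful _ (T_action Tf)); apply: Rf.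
Qed.

Lemma action_axioms_right_hereditary : right_hereditary X.
Proof.
by move=> R H /X_T Rf; apply/X_T => f Tf; apply: holds_sub_rep (T_action Tf) (Rf f Tf).
Qed.

Lemma action_axioms_right_local : right_local X.
Proof.
move=> R X_fg; apply/X_T => f Tf ex ey.
pose l := List.map ey (List.seq 0 (fbound f)).
pose H := Subgroup (gen_one l) (@gen_mul _ l) (@gen_inv _ l).
pose eyH y : subgrp H := exist _ (List.nth y l (gone _)) (gen_by_nth l y).
have eyH_ey : agree_below (fbound f) (sval \o eyH) ey.
  move=> y /ltP y_f; rewrite /= (List.nth_indep _ _ (ey 0)); last first.
    by rewrite List.length_map List.length_seq.
  by rewrite List.map_nth List.seq_nth.
have /X_T XH : X (sub_rep H) by apply: X_fg; exists l.
apply/(sat_eq_below ex eyH_ey (leqnn _)).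
by apply/sat_sub_rep; [apply: T_action | apply: XH].
Qed.

End ActionTypeAxioms.

Section LayerAxioms.
Variables (K : comPzRingType) (X : rclass K) (T : formula K -> Prop).
Hypotheses (T_action : forall f, T f -> action_type f)
  (X_layer : forall (R : rep K) (i : nat -> rG R), free_on i ->
     X R <-> (forall f, T f -> forall ex, sat ex i f))
  (X_ax : axiomatized X) (X_sat : saturated X).

Lemma mem_generated R (j : nat -> rG R) : (forall g, exists w, free_eval j w = g) ->
  X R <-> (forall f, T f -> forall ex, sat ex j f).
Proof.
move=> j_onto; rewrite -(mem_pullback (free_eval_hom j) j_onto X_ax X_sat).
rewrite (X_layer (R := pullback (free_eval_hom j)) free_grp_free_on).
have j_gen : free_eval j \o free_gen = j.
  by apply: functional_extensionality => y; apply: free_eval_gen.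
split=> Xf f Tf ex.
  by rewrite -j_gen -sat_pullback //; [apply: Xf | apply: T_action].
by rewrite sat_pullback ?j_gen //; [apply: Xf | apply: T_action].
Qed.

Lemma mem_holds (X_her : right_hereditary X) R : X R -> forall f, T f -> holds R f.
Proof.
move=> XR f Tf ex ey.
pose H := image_subgroup (free_eval_hom ey).
pose eyH y : subgrp H := exist _ (ey y) (ex_intro _ (free_gen y) (free_eval_gen ey y)).
have eyH_onto : forall h, exists w, free_eval eyH w = h.
  by apply: free_eval_subgrp_onto => g [w <-]; exists w.
have := (mem_generated (R := sub_rep H) eyH_onto).1 (X_her R H XR) f Tf ex.
by move/sat_sub_rep; apply; apply: T_action.
Qed.

Lemma holds_mem (X_loc : right_local X) R : (forall f, T f -> holds R f) -> X R.
Proof.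
move=> R_T; apply: X_loc => H [l Hl].
pose j y : subgrp H := exist _ _ ((Hl _).2 (gen_by_nth l y)).
have j_onto : forall h, exists w, free_eval j w = h.
  by apply: free_eval_subgrp_onto => g /Hl /gen_by_free_eval.
apply/(mem_generated (R := sub_rep H) j_onto) => f Tf ex.
by apply/sat_sub_rep; [apply: T_action | apply: R_T].
Qed.

End LayerAxioms.

Theorem theorem3p2 (K : comPzRingType) (X : rclass K) :
  axiomatized X -> layer_axiomatized X ->
  (action_axiomatized X <-> strictly_saturated X).
Proof.
move=> X_ax [T [T_action X_layer]]; split.
  move=> [T' [T'_action X_T']]; split; [|split].
  - exact: action_axioms_saturated X_T'.
  - exact: action_axioms_right_hereditary T'_action X_T'.
  - exact: action_axioms_right_local T'_action X_T'.
move=> [X_sat [X_her X_loc]]; exists T; split=> // R; split.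
- exact: mem_holds.
- exact: holds_mem.
Qed.
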